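(* Let $A,B,C$ be non-empty sets, $I$ a non-empty index set, $\{V_i\}_{i\in I}\subseteq\mathcal R(A)$, $\{W_i\}_{i\in I}\subseteq\mathcal R(B)$, $\{X_i\}_{i\in I}\subseteq\mathcal R(C)$, $Z\in\mathcal R(A,B)$ and $Y\in\mathcal R(B,C)$. If $R\in\mathcal R(A,B)$ is a solution to $WL^{2\text{-}3}(A,B,I,V_i,W_i,Z)$ and $S\in\mathcal R(B,C)$ is a solution to $WL^{2\text{-}3}(B,C,I,W_i,X_i,Y)$, then $R\circ S$ is a solution to $WL^{2\text{-}3}(A,C,I,V_i,X_i,Z\circ Y)$.
   Context: $\mathcal L=(L,\wedge,\vee,\otimes,\to,0,1)$ is a complete residuated lattice. For non-empty sets $X,Y$, $\mathcal R(X,Y)$ is the set of fuzzy relations $X\times Y\to L$, $\mathcal R(X)=\mathcal R(X,X)$, ordered pointwise; $R^{-1}(y,x)=R(x,y)$; $(R\circ S)(x,t)=\bigvee_{y}R(x,y)\otimes S(y,t)$. For non-empty sets $P,Q$, index set $I$, $\{V_i\}\subseteq\mathcal R(P)$, $\{W_i\}\subseteq\mathcal R(Q)$, $Z\in\mathcal R(P,Q)$, the system $WL^{2\text{-}3}(P,Q,I,V_i,W_i,Z)$ in the unknown $U\in\mathcal R(P,Q)$ consists of $U^{-1}\circ V_i\le W_i\circ U^{-1}$ and $U\circ W_i\le V_i\circ U$ for all $i\in I$, together with $U\le Z$. *)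

Record CRL := {
  car :> Type;
  le : car -> car -> Prop;
  meet : car -> car -> car;
  join : car -> car -> car;
  mult : car -> car -> car;
  impl : car -> car -> car;
  bot : car;
  top : car;
  sup : (car -> Prop) -> car;
  le_refl : forall x, le x x;
  le_trans : forall x y z, le x y -> le y z -> le x z;
  le_antisym : forall x y, le x y -> le y x -> x = y;
  meet_glb : forall x y z, le z (meet x y) <-> (le z x /\ le z y);
  join_lub : forall x y z, le (join x y) z <-> (le x z /\ le y z);
  sup_ub : forall (P : car -> Prop) x, P x -> le x (sup P);
  sup_least : forall (P : car -> Prop) z, (forall x, P x -> le x z) -> le (sup P) z;
  bot_least : forall x, le bot x;
  top_greatest : forall x, le x top;
  mult_assoc : forall x y z, mult x (mult y z) = mult (mult x y) z;
  mult_comm : forall x y, mult x y = mult y x;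
  mult_top : forall x, mult x top = x;
  adjoint : forall x y z, le (mult x y) z <-> le x (impl y z)
}.

Section FuzzyRel.
Variable L : CRL.

Definition frel (X Y : Type) := X -> Y -> L.

Definition rle {X Y : Type} (R S : frel X Y) : Prop :=
  forall x y, le L (R x y) (S x y).

Definition rinv {X Y : Type} (R : frel X Y) : frel Y X := fun y x => R x y.

Definition rcomp {X Y T : Type} (R : frel X Y) (S : frel Y T) : frel X T :=
  fun x t => sup L (fun a => exists y, a = mult L (R x y) (S y t)).

Definition WL23_sol {P Q I : Type} (V : I -> frel P P) (W : I -> frel Q Q)
  (Z : frel P Q) (U : frel P Q) : Prop :=
  (forall i, rle (rcomp (rinv U) (V i)) (rcomp (W i) (rinv U))) /\
  (forall i, rle (rcomp U (W i)) (rcomp (V i) U)) /\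
  rle U Z.

End FuzzyRel.

Arguments rle {L X Y}.
Arguments rinv {L X Y}.
Arguments rcomp {L X Y T}.
Arguments WL23_sol {L P Q I}.


(* (R o S) o X_i <= R o (W_i o S) <= (V_i o R) o S: first S and then R is slid
   past the coefficient relation. The inverse inequality is the same argument
   for S^-1 o R^-1 = (R o S)^-1. All that is needed is that o is associative and
   monotone, which in a complete residuated lattice follows from adjointness
   (x (x) - preserves arbitrary suprema). *)

Section FuzzyRelationAlgebra.
Variable L : CRL.

Lemma mult_le_l (x x' y : L) : le L x x' -> le L (mult L x y) (mult L x' y).
Proof.
  intro Hx. apply adjoint. apply le_trans with x'; [exact Hx |].
  apply adjoint, le_refl.
Qed.

Lemma mult_le_r (x y y' : L) : le L y y' -> le L (mult L x y) (mult L x y').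
Proof. intro Hy. rewrite !(mult_comm L x). now apply mult_le_l. Qed.

Lemma rle_refl {X Y : Type} (R : frel L X Y) : rle R R.
Proof. intros x y. apply le_refl. Qed.

Lemma rle_trans {X Y : Type} (R S T : frel L X Y) : rle R S -> rle S T -> rle R T.
Proof. intros HRS HST x y. eapply le_trans; eauto. Qed.

Lemma rcomp_ub {X Y T : Type} (R : frel L X Y) (S : frel L Y T) x y t :
  le L (mult L (R x y) (S y t)) (rcomp R S x t).
Proof. apply sup_ub. eauto. Qed.

Lemma rcomp_least {X Y T : Type} (R : frel L X Y) (S : frel L Y T) x t z :
  (forall y, le L (mult L (R x y) (S y t)) z) -> le L (rcomp R S x t) z.
Proof. intro Hz. apply sup_least. intros a [y ->]. apply Hz. Qed.

Lemma rcomp_le {X Y T : Type} (R R' : frel L X Y) (S S' : frel L Y T) :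
  rle R R' -> rle S S' -> rle (rcomp R S) (rcomp R' S').
Proof.
  intros HR HS x t. apply rcomp_least. intro y.
  apply le_trans with (mult L (R' x y) (S' y t)); [| apply rcomp_ub].
  apply le_trans with (mult L (R' x y) (S y t)).
  - apply mult_le_l, HR.
  - apply mult_le_r, HS.
Qed.

Lemma rcomp_le_l {X Y T : Type} (R R' : frel L X Y) (S : frel L Y T) :
  rle R R' -> rle (rcomp R S) (rcomp R' S).
Proof. intro HR. apply rcomp_le; [exact HR | apply rle_refl]. Qed.

Lemma rcomp_le_r {X Y T : Type} (R : frel L X Y) (S S' : frel L Y T) :
  rle S S' -> rle (rcomp R S) (rcomp R S').
Proof. apply rcomp_le, rle_refl. Qed.

(* Adjointness lets us take the supremum defining the inner composite out of a
   product, which is what both halves of associativity need. *)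
Lemma rcompA_le {X Y T U : Type} (R : frel L X Y) (S : frel L Y T) (Q : frel L T U) :
  rle (rcomp (rcomp R S) Q) (rcomp R (rcomp S Q)).
Proof.
  intros x u. apply rcomp_least. intro t.
  apply adjoint, rcomp_least. intro y.
  apply (proj1 (adjoint _ _ _ _)).
  rewrite <- mult_assoc.
  apply le_trans with (mult L (R x y) (rcomp S Q y u)); [| apply rcomp_ub].
  apply mult_le_r, rcomp_ub.
Qed.

Lemma rcompA_ge {X Y T U : Type} (R : frel L X Y) (S : frel L Y T) (Q : frel L T U) :
  rle (rcomp R (rcomp S Q)) (rcomp (rcomp R S) Q).
Proof.
  intros x u. apply rcomp_least. intro y.
  rewrite mult_comm. apply adjoint, rcomp_least. intro t.
  apply (proj1 (adjoint _ _ _ _)).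
  rewrite mult_comm, mult_assoc.
  apply le_trans with (mult L (rcomp R S x t) (Q t u)); [| apply rcomp_ub].
  apply mult_le_l, rcomp_ub.
Qed.

Lemma rinv_rcomp_le {X Y T : Type} (R : frel L X Y) (S : frel L Y T) :
  rle (rinv (rcomp R S)) (rcomp (rinv S) (rinv R)).
Proof.
  intros t x. apply rcomp_least. intro y. rewrite mult_comm.
  exact (rcomp_ub (rinv S) (rinv R) t y x).
Qed.

Lemma rinv_rcomp_ge {X Y T : Type} (R : frel L X Y) (S : frel L Y T) :
  rle (rcomp (rinv S) (rinv R)) (rinv (rcomp R S)).
Proof.
  intros t x. apply rcomp_least. intro y. unfold rinv. rewrite mult_comm.
  apply rcomp_ub.
Qed.

Lemma rcomp_forth {A B C : Type} (V : frel L A A) (W : frel L B B) (X : frel L C C)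
  (R : frel L A B) (S : frel L B C) :
  rle (rcomp R W) (rcomp V R) -> rle (rcomp S X) (rcomp W S) ->
  rle (rcomp (rcomp R S) X) (rcomp V (rcomp R S)).
Proof.
  intros HR HS.
  apply rle_trans with (rcomp R (rcomp S X)); [apply rcompA_le |].
  apply rle_trans with (rcomp R (rcomp W S)); [apply rcomp_le_r, HS |].
  apply rle_trans with (rcomp (rcomp R W) S); [apply rcompA_ge |].
  apply rle_trans with (rcomp (rcomp V R) S); [apply rcomp_le_l, HR |].
  apply rcompA_le.
Qed.

Lemma rcomp_back {A B C : Type} (V : frel L A A) (W : frel L B B) (X : frel L C C)
  (R : frel L A B) (S : frel L B C) :
  rle (rcomp (rinv R) V) (rcomp W (rinv R)) ->
  rle (rcomp (rinv S) W) (rcomp X (rinv S)) ->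
  rle (rcomp (rinv (rcomp R S)) V) (rcomp X (rinv (rcomp R S))).
Proof.
  intros HR HS.
  apply rle_trans with (rcomp (rcomp (rinv S) (rinv R)) V);
    [apply rcomp_le_l, rinv_rcomp_le |].
  apply rle_trans with (rcomp X (rcomp (rinv S) (rinv R)));
    [| apply rcomp_le_r, rinv_rcomp_ge].
  apply rle_trans with (rcomp (rinv S) (rcomp (rinv R) V)); [apply rcompA_le |].
  apply rle_trans with (rcomp (rinv S) (rcomp W (rinv R))); [apply rcomp_le_r, HR |].
  apply rle_trans with (rcomp (rcomp (rinv S) W) (rinv R)); [apply rcompA_ge |].
  apply rle_trans with (rcomp (rcomp X (rinv S)) (rinv R)); [apply rcomp_le_l, HS |].
  apply rcompA_le.
Qed.

End FuzzyRelationAlgebra.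

Theorem proposition4p3 (L : CRL) (A B C I : Type)
  (a0 : A) (b0 : B) (c0 : C) (i0 : I)
  (V : I -> frel L A A) (W : I -> frel L B B) (X : I -> frel L C C)
  (Z : frel L A B) (Y : frel L B C) (R : frel L A B) (S : frel L B C) :
  WL23_sol V W Z R -> WL23_sol W X Y S ->
  WL23_sol V X (rcomp Z Y) (rcomp R S).
Proof.
  intros [R_back [R_forth R_le]] [S_back [S_forth S_le]].
  split; [| split].
  - intro i. apply rcomp_back with (W i); [apply R_back | apply S_back].
  - intro i. apply rcomp_forth with (W i); [apply R_forth | apply S_forth].
  - apply rcomp_le; assumption.
Qed.
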